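(* Let $\mathscr G=(\mathscr V,\mathscr E)$ be a finite connected graph with $N$ vertices and $M\ge0$ an integer. The uniform saving model $(Z_t)$ on $\mathscr C_{N,M}$ has a unique stationary distribution $\pi_Z$, and $$\lim_{t\to\infty}P_\eta(Z_t=\xi)=\pi_Z(\xi)\quad\text{for all }\xi,\eta\in\mathscr C_{N,M},$$ where $P_\eta$ denotes the law of the process started from $Z_0=\eta$.
   Context: $\mathscr C_{N,M}$ is the set of maps $\xi:\mathscr V\to\mathbb N$ with $\sum_x\xi(x)=M$. The uniform saving model is the discrete-time Markov chain on $\mathscr C_{N,M}$: at each step an edge $(x,y)\in\mathscr E$ is chosen uniformly at random; independent $U_1$ uniform on $\{0,\dots,Z_t(x)\}$ and $U_2$ uniform on $\{0,\dots,Z_t(y)\}$ are drawn; given $U_1=c_x,U_2=c_y$, $U$ is drawn uniformly from $\{0,\dots,Z_t(x)+Z_t(y)-c_x-c_y\}$; then $Z_{t+1}(x)=c_x+U$, $Z_{t+1}(y)=Z_t(x)+Z_t(y)-c_x-U$, $Z_{t+1}(z)=Z_t(z)$ for $z\notin\{x,y\}$. *)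

From HB Require Import structures.
From mathcomp Require Import all_boot all_order all_algebra.
From mathcomp Require Import all_classical all_reals topology normedtype sequences.
Set Implicit Arguments. Unset Strict Implicit. Unset Printing Implicit Defensive.
Import Order.TTheory GRing.Theory Num.Theory.
Local Open Scope ring_scope.

(* C_{N,M}: maps xi : V -> N with sum M (values are automatically <= M,
   so we take them in 'I_M.+1 to get a finite type). *)
Definition config (V : finType) (M : nat) : finType :=
  {f : {ffun V -> 'I_M.+1} | (\sum_(x : V) (f x : nat))%N == M}.

Definition cval (V : finType) (M : nat) (xi : config V M) (x : V) : nat :=
  nat_of_ord (val xi x).

(* The configuration after the update on edge (x,y) with kept amounts cx
   and redistributed amount u:  xi'(x) = cx + u,
   xi'(y) = eta(x)+eta(y)-cx-u, xi'(z) = eta(z) otherwise. *)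
Definition is_update (V : finType) (M : nat) (eta xi : config V M)
    (x y : V) (cx u : nat) : bool :=
  [forall z : V, cval xi z ==
     (if z == x then (cx + u)%N
      else if z == y then (cval eta x + cval eta y - cx - u)%N
      else cval eta z)].

(* One-step transition probability of the uniform saving model: an edge
   (ordered pair (x,y) with e x y) uniformly at random, U1 uniform on
   {0..eta x}, U2 uniform on {0..eta y}, U uniform on
   {0..eta x + eta y - U1 - U2}. If there is no edge (only possible when
   N = 1, where the state space is a singleton) the chain stays put. *)
Definition usm_step (R : realType) (V : finType) (e : rel V) (M : nat)
    (eta xi : config V M) : R :=
  let nE := #|[pred p : V * V | e p.1 p.2]| in
  if nE == 0%N then (eta == xi)%:R else
  nE%:R^-1 * \sum_(p : V * V | e p.1 p.2)
    let a := cval eta p.1 in let b := cval eta p.2 in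
    \sum_(cx < a.+1) \sum_(cy < b.+1)
      (a.+1%:R^-1 * b.+1%:R^-1 *
        let r := (a + b - cx - cy)%N in
        \sum_(u < r.+1) r.+1%:R^-1 * (is_update eta xi p.1 p.2 cx u)%:R).

Fixpoint usm_law (R : realType) (V : finType) (e : rel V) (M : nat)
    (t : nat) (eta xi : config V M) : R :=
  match t with
  | 0%N => (eta == xi)%:R
  | t'.+1 => \sum_(zeta : config V M)
               usm_law R e t' eta zeta * usm_step R e zeta xi
  end.

Definition usm_stationary (R : realType) (V : finType) (e : rel V) (M : nat)
    (pi : config V M -> R) : Prop :=
  (forall xi, 0 <= pi xi) /\ \sum_(xi : config V M) pi xi = 1 /\
  (forall xi, \sum_(eta : config V M) pi eta * usm_step R e eta xi = pi xi).

From HB Require Import structures.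
From mathcomp Require Import all_boot all_order all_algebra.
From mathcomp Require Import all_classical all_reals topology normedtype sequences.
From mathcomp Require Import zify lra.
Set Implicit Arguments. Unset Strict Implicit. Unset Printing Implicit Defensive.
Import Order.TTheory GRing.Theory Num.Theory numFieldNormedType.Exports.
Local Open Scope classical_set_scope. Local Open Scope ring_scope.

(* Fix a vertex v0 and let c be the configuration with all M units at v0.
   Pushing the whole content of a vertex x != v0 along a path to v0, one edge
   per step, happens with positive probability and adds the content of x to
   the mass at v0, so c is reachable from every configuration; and keeping all
   amounts in place has positive probability, so c is aperiodic. Hence there
   are K and d > 0 such that every configuration reaches c in K steps with
   probability at least d (Doeblin's condition). Every K steps this shrinks the
   oscillation over the starting state of each column of the t-step transition
   matrix by the factor 1 - d, so all rows converge to a common limit pi.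
   Passing to the limit in the Chapman-Kolmogorov equation shows that pi is
   stationary, and a stationary pi' satisfies pi' = pi' P^t -> pi. *)

Section WeightedSums.
Variables (R : realType) (I : finType).

Lemma sum_mul_delta (F : I -> R) j : \sum_i F i * (i == j)%:R = F j.
Proof.
rewrite (bigD1 j) //= eqxx mulr1 big1 ?addr0 // => i /negbTE ->.
exact: mulr0.
Qed.

Lemma sum_delta_mul (F : I -> R) i : \sum_j (i == j)%:R * F j = F i.
Proof.
under eq_bigr do rewrite mulrC eq_sym.
exact: sum_mul_delta.
Qed.

Lemma sum_delta (i : I) : \sum_j ((i == j)%:R : R) = 1.
Proof.
by rewrite (bigD1 i) //= eqxx big1 ?addr0 // => j; rewrite eq_sym => /negbTE ->.
Qed.

Lemma psumr_gt0 (P : pred I) (F : I -> R) i :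
  (forall j, P j -> 0 <= F j) -> P i -> 0 < F i -> 0 < \sum_(j | P j) F j.
Proof.
move=> F_ge0 Pi Fi_gt0; rewrite (bigD1 i) //= ltr_pwDl //.
by apply: sumr_ge0 => j /andP[Pj _]; exact: F_ge0.
Qed.

Lemma cvg_sumr (f : I -> nat -> R) (l : I -> R) :
  (forall i, f i @ \oo --> l i) -> (fun t => \sum_i f i t) @ \oo --> \sum_i l i.
Proof. by move=> f_cvg; apply: cvg_big => //; exact: add_continuous. Qed.

Lemma sum_uniform (n : nat) : \sum_(i < n.+1) (n.+1%:R : R)^-1 = 1.
Proof. by rewrite sumr_const card_ord -[_ *+ _]mulr_natr mulVf ?pnatr_eq0. Qed.

Variable Q : I -> R.
Hypotheses (Q_ge0 : forall i, 0 <= Q i) (Q_sum1 : \sum_i Q i = 1).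

Lemma wsum_affine (g : I -> R) a b :
  \sum_i Q i * (a * g i + b) = a * \sum_i Q i * g i + b.
Proof.
under eq_bigr do rewrite mulrDr mulrCA.
by rewrite big_split /= -mulr_sumr -mulr_suml Q_sum1 mul1r.
Qed.

Lemma wsum_bounds (g : I -> R) lo hi :
  (forall i, lo <= g i <= hi) -> lo <= \sum_i Q i * g i <= hi.
Proof.
move=> g_bnd; rewrite -[lo]mul1r -[hi]mul1r -Q_sum1 !mulr_suml.
apply/andP; split; apply: ler_sum => i _; apply: ler_wpM2l => //;
  by case/andP: (g_bnd i).
Qed.

Lemma wsum_ge_term (h : I -> R) c d :
  (forall i, 0 <= h i) -> 0 <= d -> d <= Q c -> d * h c <= \sum_i Q i * h i.
Proof.
move=> h_ge0 d_ge0 d_le; rewrite (bigD1 c) //=.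
apply: le_trans (ler_wpM2r (h_ge0 c) d_le) _.
by rewrite lerDl; apply: sumr_ge0 => i _; exact: mulr_ge0.
Qed.

(* Doeblin's contraction: the weight [d] that [Q] puts on [c] shrinks the
   oscillation of [g] by the factor [1 - d]. *)
Lemma wsum_contract (g : I -> R) c d lo eps :
  0 <= d -> d <= Q c -> (forall i, lo <= g i <= lo + eps) ->
  let lo' := d * g c + (1 - d) * lo in
  lo' <= \sum_i Q i * g i <= lo' + (1 - d) * eps.
Proof.
move=> d_ge0 d_le g_bnd /=.
have above_lo i : 0 <= 1 * g i + - lo by case/andP: (g_bnd i) => *; lra.
have below_hi i : 0 <= -1 * g i + (lo + eps) by case/andP: (g_bnd i) => *; lra.
have := wsum_ge_term above_lo d_ge0 d_le.
have := wsum_ge_term below_hi d_ge0 d_le.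
rewrite !wsum_affine => *; apply/andP; split; lra.
Qed.

End WeightedSums.

Section FiniteMarkovChain.
Variables (R : realType) (S : finType) (P : S -> S -> R).

Fixpoint nstep (t : nat) (a b : S) : R :=
  if t is t'.+1 then \sum_z nstep t' a z * P z b else (a == b)%:R.

Definition reachable (a b : S) : Prop := exists t, 0 < nstep t a b.

Lemma nstep1 a b : nstep 1 a b = P a b.
Proof. exact: sum_delta_mul. Qed.

Lemma nstepD s t a b :
  nstep (s + t) a b = \sum_z nstep s a z * nstep t z b.
Proof.
elim: t b => [|t IH] b /=; first by rewrite addn0 sum_mul_delta.
rewrite addnS /=; under eq_bigr do rewrite IH mulr_suml.
rewrite exchange_big /=; apply: eq_bigr => z _.
by rewrite mulr_sumr; apply: eq_bigr => w _; rewrite mulrA.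
Qed.

Lemma invariant_nstep (pi : S -> R) :
  (forall b, \sum_a pi a * P a b = pi b) ->
  forall t b, \sum_a pi a * nstep t a b = pi b.
Proof.
move=> pi_inv; elim=> [|t IH] b /=; first exact: sum_mul_delta.
rewrite -[RHS]pi_inv; under eq_bigr do rewrite mulr_sumr.
rewrite exchange_big /=; apply: eq_bigr => z _.
by rewrite -IH mulr_suml; apply: eq_bigr => a _; rewrite mulrA.
Qed.

Hypotheses (P_ge0 : forall a b, 0 <= P a b)
           (P_sum1 : forall a, \sum_b P a b = 1).

Lemma nstep_ge0 t a b : 0 <= nstep t a b.
Proof.
elim: t b => [|t IH] b /=; first exact: ler0n.
by apply: sumr_ge0 => z _; apply: mulr_ge0.
Qed.

Lemma nstep_sum1 t a : \sum_b nstep t a b = 1.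
Proof.
elim: t => [|t IH] /=; first exact: sum_delta.
rewrite exchange_big /= -{}IH; apply: eq_bigr => z _.
by rewrite -mulr_sumr P_sum1 mulr1.
Qed.

Lemma nstep_le1 t a b : nstep t a b <= 1.
Proof.
rewrite -[X in _ <= X](nstep_sum1 t a) (bigD1 b) //= lerDl.
by apply: sumr_ge0 => z _; exact: nstep_ge0.
Qed.

Lemma reachable_refl a : reachable a a.
Proof. by exists 0%N; rewrite /= eqxx ltr01. Qed.

Lemma reachable_step a b : 0 < P a b -> reachable a b.
Proof. by exists 1%N; rewrite nstep1. Qed.

Lemma reachable_trans a b c : reachable a b -> reachable b c -> reachable a c.
Proof.
move=> [s ab] [t bc]; exists (s + t)%N; rewrite nstepD.
apply: (@psumr_gt0 _ _ predT _ b) => //; last exact: mulr_gt0.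
by move=> z _; apply: mulr_ge0; exact: nstep_ge0.
Qed.

(* Since [P c c > 0] the chain can wait at [c], so the largest of the hitting
   times of [c] serves as a common time for all starting states. *)
Lemma doeblin_of_reachable c :
  0 < P c c -> (forall a, reachable a c) ->
  exists K d, 0 < d /\ forall a, d <= nstep K a c.
Proof.
move=> Pcc_gt0 reach_c.
have stay t s a : 0 < nstep t a c -> 0 < nstep (t + s) a c.
  move=> t_pos; elim: s => [|s IH]; first by rewrite addn0.
  rewrite addnS /=.
  apply: (@psumr_gt0 _ _ predT _ c) => //; last exact: mulr_gt0.
  by move=> z _; apply: mulr_ge0; [exact: nstep_ge0 | exact: P_ge0].
pose time a := xchoose (reach_c a).
pose K := (\max_a time a)%N.
have K_pos a : 0 < nstep K a c.
  have time_le : (time a <= K)%N by exact: leq_bigmax.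
  by rewrite -(subnKC time_le); exact: stay (xchooseP (reach_c a)).
have [a0 _ a0_min] := @arg_minP _ R S c predT (fun a => nstep K a c) isT.
by exists K, (nstep K a0 c); split => // a; exact: a0_min.
Qed.

Section Doeblin.
Variables (K : nat) (c : S) (d : R).
Hypotheses (d_gt0 : 0 < d) (nstepK_ge : forall a, d <= nstep K a c).

Lemma nstep_oscillation b n :
  exists lo, forall s a, lo <= nstep (s + n * K) a b <= lo + (1 - d) ^+ n.
Proof.
suff [lo lo_bnd] :
    exists lo, forall a, lo <= nstep (n * K) a b <= lo + (1 - d) ^+ n.
  exists lo => s a; rewrite nstepD; apply: wsum_bounds => //.
  - by move=> z; exact: nstep_ge0.
  - exact: nstep_sum1.
elim: n => [|n [lo IH]].
  by exists 0 => a; rewrite mul0n add0r expr0 nstep_ge0 nstep_le1.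
exists (d * nstep (n * K) c b + (1 - d) * lo) => a.
rewrite mulSn nstepD exprS.
apply: wsum_contract => //; [exact: nstep_ge0 | exact: nstep_sum1 | exact: ltW].
Qed.

Lemma nstep_cauchy b eps : 0 < eps ->
  exists N, forall t t' a a', (N <= t)%N -> (N <= t')%N ->
    `|nstep t a b - nstep t' a' b| < eps.
Proof.
move=> eps_gt0.
have d_le1 : d <= 1 by apply: le_trans (nstepK_ge c) (nstep_le1 _ _ _).
have [n _ small] : \forall n \near \oo, (1 - d) ^+ n < eps.
  have: `|1 - d| < 1 by rewrite ger0_norm ?subr_ge0 // ltrBlDr ltrDl.
  move/cvg_expr/cvgrPdist_lt/(_ eps eps_gt0); apply: filterS => n.
  by rewrite sub0r normrN ger0_norm // exprn_ge0 // subr_ge0.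
have [lo lo_bnd] := nstep_oscillation b n.
exists (n * K)%N => t t' a a' t_ge t'_ge.
have := lo_bnd (t - n * K)%N a; have := lo_bnd (t' - n * K)%N a'.
rewrite !subnK // => /andP[? ?] /andP[? ?].
have := small n (leqnn n) => ?; rewrite ltr_norml; apply/andP; split; lra.
Qed.

Lemma nstep_cvg a b :
  (fun t => nstep t a b) @ \oo --> lim ((fun t => nstep t c b) @ \oo).
Proof.
have from_c : cvg ((fun t => nstep t c b) @ \oo).
  apply/cauchy_cvgP; apply: cauchy_exP => eps eps_gt0.
  have [N close] := nstep_cauchy b eps_gt0.
  by exists (nstep N c b), N => // t /= t_ge; exact: close.
apply/cvgrPdist_lt => eps eps_gt0.
have half_gt0 : 0 < eps / 2 by rewrite divr_gt0.
have [N close] := nstep_cauchy b half_gt0.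
have near_lim := (cvgrPdist_lt _ _).1 from_c _ half_gt0.
near=> t.
rewrite [eps]splitr; apply: le_lt_trans (ler_distD (nstep t c b) _ _) _.
apply: ltrD.
  by near: t; apply: near_lim.
by apply: close; near: t; exists N.
Unshelve. all: by end_near.
Qed.

End Doeblin.

Section Limit.
Variable pi : S -> R.
Hypothesis nstep_cvg_pi : forall a b, (fun t => nstep t a b) @ \oo --> pi b.

Lemma limit_ge0 b : 0 <= pi b.
Proof.
apply: (cvgr_to_ge (@nstep_cvg_pi b b)).
by apply: nearW => t; exact: nstep_ge0.
Qed.

Lemma limit_sum1 (a : S) : \sum_b pi b = 1.
Proof.
have := cvg_sumr (@nstep_cvg_pi a).
under eq_fun do rewrite nstep_sum1.
by move/(cvg_unique (@Rhausdorff R) (cvg_cst (1 : R))) => ->.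
Qed.

Lemma limit_invariant b : \sum_a pi a * P a b = pi b.
Proof.
have shifted : (fun t => nstep t.+1 b b) @ \oo --> \sum_a pi a * P a b.
  exact: cvg_sumr (fun a => cvgM (@nstep_cvg_pi b a) (cvg_cst (P a b))).
have from_next : [sequence nstep n.+1 b b]_n @ \oo --> pi b.
  by rewrite (cvg_shiftS (fun t => nstep t b b)); exact: nstep_cvg_pi.
exact: cvg_unique _ shifted from_next.
Qed.

Lemma invariant_unique (pi' : S -> R) :
  \sum_a pi' a = 1 -> (forall b, \sum_a pi' a * P a b = pi' b) -> pi' = pi.
Proof.
move=> pi'_sum1 pi'_inv; apply: boolp.funext => b.
have avg_cvg :
    (fun t => \sum_a pi' a * nstep t a b) @ \oo --> \sum_a pi' a * pi b.
  exact: cvg_sumr (fun a => cvgM (cvg_cst (pi' a)) (@nstep_cvg_pi a b)).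
move: avg_cvg; under eq_fun do rewrite invariant_nstep //.
move/(cvg_unique (@Rhausdorff R) (cvg_cst (pi' b))) => ->.
by rewrite -mulr_suml pi'_sum1 mul1r.
Qed.

End Limit.
End FiniteMarkovChain.

Section Configurations.
Variables (V : finType) (M : nat).

Lemma cval_inj (a b : config V M) : (forall z, cval a z = cval b z) -> a = b.
Proof.
by move=> ab; apply: val_inj; apply/ffunP => z; apply: ord_inj; exact: ab.
Qed.

Lemma cval_sum (a : config V M) : (\sum_z cval a z)%N = M.
Proof. by case: a => f f_sum; apply/eqP. Qed.

Lemma cval_le (a : config V M) x : (cval a x <= M)%N.
Proof. by rewrite -ltnS ltn_ord. Qed.

Lemma sum_split2 (f : V -> nat) x y : x != y ->
  (\sum_z f z = f x + f y + \sum_(z | (z != x) && (z != y)) f z)%N.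
Proof.
move=> xy; rewrite (bigD1 x) //= (bigD1 y) /=; last by rewrite eq_sym.
by rewrite addnA; congr (_ + _)%N; apply: eq_bigl => z; rewrite andbC.
Qed.

Lemma cval_add2_le (a : config V M) x y :
  x != y -> (cval a x + cval a y <= M)%N.
Proof. by move=> xy; rewrite -{3}(cval_sum a) (sum_split2 _ xy) leq_addr. Qed.

(* Meaningful only when [vx + vy = eta x + eta y]; otherwise [eta] itself is
   returned. *)
Definition reassign (eta : config V M) (x y : V) (vx vy : nat) : config V M :=
  insubd eta [ffun z => inord (if z == x then vx else if z == y then vy
                               else cval eta z) : 'I_M.+1].

Lemma cval_reassign (eta : config V M) x y vx vy z :
  x != y -> (vx + vy = cval eta x + cval eta y)%N ->
  cval (reassign eta x y vx vy) z =
    if z == x then vx else if z == y then vy else cval eta z.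
Proof.
move=> xy sum_xy.
set g := fun w => if w == x then vx else if w == y then vy else cval eta w.
have g_le w : (g w <= M)%N.
  have := cval_add2_le eta xy; rewrite -sum_xy /g => le_M.
  case: ifP => _; first lia.
  case: ifP => _; first lia.
  exact: cval_le.
have g_sum : (\sum_w ([ffun z => inord (g z)] w : 'I_M.+1) == M :> nat)%N.
  apply/eqP; apply: eq_trans (cval_sum eta).
  rewrite (sum_split2 _ xy) (sum_split2 (cval eta) xy) !ffunE.
  rewrite (inordK (g_le x)) (inordK (g_le y)).
  have -> : (g x + g y = cval eta x + cval eta y)%N.
    by rewrite /g eqxx eq_sym (negbTE xy) eqxx sum_xy.
  congr (_ + _)%N; apply: eq_bigr => w /andP[/negbTE w_x /negbTE w_y].
  by rewrite ffunE (inordK (g_le w)) /g w_x w_y.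
by rewrite /cval /reassign insubdK // ffunE (inordK (g_le z)).
Qed.

Lemma concentrated_exists (v0 : V) : exists c : config V M, cval c v0 = M.
Proof.
pose f := [ffun z => inord (if z == v0 then M else 0) : 'I_M.+1].
have f_sum : (\sum_z (f z : nat))%N == M.
  rewrite (bigD1 v0) //= ffunE eqxx inordK // big1 ?addn0 //.
  by move=> z z_v0; rewrite ffunE (negbTE z_v0) inordK.
by exists (exist _ f f_sum); rewrite /cval /= ffunE eqxx inordK.
Qed.

Lemma concentrated_unique (v0 : V) (a b : config V M) :
  cval a v0 = M -> cval b v0 = M -> a = b.
Proof.
have elsewhere0 (c : config V M) z : cval c v0 = M -> z != v0 -> cval c z = 0%N.
  move=> c_v0 z_v0; have := cval_add2_le c z_v0.
  by rewrite c_v0 -[X in (_ <= X)%N]add0n leq_add2r leqn0 => /eqP.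
move=> a_v0 b_v0; apply: cval_inj => z; case: (eqVneq z v0) => [->|z_v0].
  by rewrite a_v0 b_v0.
by rewrite (elsewhere0 a) // (elsewhere0 b).
Qed.

Lemma is_updateP (eta xi : config V M) x y cx u :
  reflect (forall z, cval xi z = if z == x then (cx + u)%N
             else if z == y then (cval eta x + cval eta y - cx - u)%N
             else cval eta z)
          (is_update eta xi x y cx u).
Proof. by apply: (iffP forallP) => h z; apply/eqP/h. Qed.

Lemma is_update_inj (eta xi xi' : config V M) x y cx u :
  is_update eta xi x y cx u -> is_update eta xi' x y cx u -> xi = xi'.
Proof.
move=> /is_updateP upd /is_updateP upd'.
by apply: cval_inj => z; rewrite upd upd'.
Qed.

Lemma is_update_reassign (eta : config V M) x y cx u :
  x != y -> (cx + u <= cval eta x + cval eta y)%N ->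
  is_update eta (reassign eta x y (cx + u) (cval eta x + cval eta y - cx - u))
    x y cx u.
Proof.
move=> xy le_xy; apply/is_updateP => z.
by rewrite cval_reassign // -subnDA subnKC.
Qed.

End Configurations.

Section UniformSavingKernel.
Variables (R : realType) (V : finType) (e : rel V) (M : nat).

Definition edge_kernel (eta xi : config V M) (x y : V) : R :=
  let a := cval eta x in let b := cval eta y in
  \sum_(cx < a.+1) \sum_(cy < b.+1)
    (a.+1%:R^-1 * b.+1%:R^-1 *
      let r := (a + b - cx - cy)%N in
      \sum_(u < r.+1) r.+1%:R^-1 * (is_update eta xi x y cx u)%:R).

Let edges := [pred p : V * V | e p.1 p.2].

Lemma usm_stepE (eta xi : config V M) : #|edges| != 0%N ->
  usm_step R e eta xi =
    #|edges|%:R^-1 * \sum_(p | e p.1 p.2) edge_kernel eta xi p.1 p.2.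
Proof. by move=> /negbTE edges_nonempty; rewrite /usm_step edges_nonempty. Qed.

Lemma edge_kernel_ge0 (eta xi : config V M) x y : 0 <= edge_kernel eta xi x y.
Proof.
apply: sumr_ge0 => cx _; apply: sumr_ge0 => cy _.
rewrite !mulr_ge0 ?invr_ge0 ?ler0n //=.
by apply: sumr_ge0 => u _; rewrite mulr_ge0 ?invr_ge0 ?ler0n.
Qed.

Lemma sum_is_update (eta : config V M) x y cx u :
  x != y -> (cx + u <= cval eta x + cval eta y)%N ->
  \sum_xi ((is_update eta xi x y cx u)%:R : R) = 1.
Proof.
move=> xy le_xy; have upd := is_update_reassign xy le_xy.
set xi0 := reassign eta x y (cx + u) (cval eta x + cval eta y - cx - u).
rewrite (bigD1 xi0) //= upd big1 ?addr0 // => xi xi_ne.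
case upd': (is_update _ _ _ _ _ _) => //.
by rewrite (is_update_inj upd' upd) eqxx in xi_ne.
Qed.

Lemma edge_kernel_sum1 (eta : config V M) x y :
  x != y -> \sum_xi edge_kernel eta xi x y = 1.
Proof.
move=> xy; rewrite /edge_kernel /=; set a := cval eta x; set b := cval eta y.
rewrite exchange_big /=.
transitivity (\sum_(cx < a.+1) (a.+1%:R : R)^-1); last exact: sum_uniform.
apply: eq_bigr => cx _; rewrite exchange_big /=.
transitivity (\sum_(cy < b.+1) (a.+1%:R : R)^-1 * b.+1%:R^-1).
  apply: eq_bigr => cy _; rewrite -mulr_sumr exchange_big /=.
  rewrite -[RHS]mulr1; congr (_ * _).
  rewrite -[RHS](sum_uniform R (a + b - cx - cy)).
  apply: eq_bigr => u _; rewrite -mulr_sumr sum_is_update ?mulr1 //.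
  by have := ltn_ord cx; have := ltn_ord u; lia.
by rewrite -mulr_sumr sum_uniform mulr1.
Qed.

Lemma edge_kernel_gt0 (eta xi : config V M) x y cx u :
  (cx <= cval eta x)%N -> (u <= cval eta x + cval eta y - cx)%N ->
  is_update eta xi x y cx u -> 0 < edge_kernel eta xi x y.
Proof.
move=> cx_le u_le upd.
have middle_ge0 (cx' : nat) r : 0 <=
  (cval eta x).+1%:R^-1 / (cval eta y).+1%:R *
    \sum_(u' < r) r%:R^-1 * (is_update eta xi x y cx' u')%:R :> R.
  rewrite !mulr_ge0 ?invr_ge0 ?ler0n // sumr_ge0 // => u' _.
  by rewrite mulr_ge0 ?invr_ge0 ?ler0n.
rewrite /edge_kernel /=.
have cx_lt : (cx < (cval eta x).+1)%N by [].
apply: (@psumr_gt0 _ _ predT _ (Ordinal cx_lt)) => //.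
  by move=> cx' _; apply: sumr_ge0 => cy _; exact: middle_ge0.
apply: (@psumr_gt0 _ _ predT _ ord0) => //=.
  by move=> cy _; exact: middle_ge0.
rewrite !mulr_gt0 ?invr_gt0 ?ltr0n //.
have u_lt : (u < (cval eta x + cval eta y - cx - 0).+1)%N by rewrite subn0 ltnS.
apply: (@psumr_gt0 _ _ predT _ (Ordinal u_lt)) => //=.
  by move=> u' _; rewrite mulr_ge0 ?invr_ge0 ?ler0n.
by rewrite upd mulr1 invr_gt0 ltr0n.
Qed.

Lemma usm_step_ge0 (eta xi : config V M) : 0 <= usm_step R e eta xi.
Proof.
have [edges0|edges_nonempty] := eqVneq #|edges| 0%N.
  by rewrite /usm_step edges0 ler0n.
rewrite usm_stepE // mulr_ge0 ?invr_ge0 ?ler0n //.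
by apply: sumr_ge0 => p _; exact: edge_kernel_ge0.
Qed.

Lemma usm_step_gt0 (eta xi : config V M) x y cx u : e x y ->
  (cx <= cval eta x)%N -> (u <= cval eta x + cval eta y - cx)%N ->
  is_update eta xi x y cx u -> 0 < usm_step R e eta xi.
Proof.
move=> e_xy cx_le u_le upd.
have edges_gt0 : (0 < #|edges|)%N by apply/card_gt0P; exists (x, y).
rewrite usm_stepE -?lt0n // mulr_gt0 ?invr_gt0 ?ltr0n //.
apply: (@psumr_gt0 _ _ (fun p => e p.1 p.2) _ (x, y)) => //.
  by move=> p _; exact: edge_kernel_ge0.
exact: edge_kernel_gt0 cx_le u_le upd.
Qed.

(* Keeping everything ([U1 = Z(x)], [U2 = 0], [U = 0]) makes the chain lazy. *)
Lemma usm_step_refl_gt0 (eta : config V M) : 0 < usm_step R e eta eta.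
Proof.
have [edges0|] := eqVneq #|edges| 0%N.
  by rewrite /usm_step edges0 /= eqxx ltr01.
rewrite -lt0n => /card_gt0P[[x y] /= e_xy].
apply: (@usm_step_gt0 _ _ x y (cval eta x) 0 e_xy) => //.
apply/is_updateP => z; case: eqP => [->|_]; first by rewrite addn0.
by case: eqP => [->|_] //; rewrite subn0 addKn.
Qed.

Lemma usm_law_nstep t (eta xi : config V M) :
  usm_law R e t eta xi = nstep (@usm_step R V e M) t eta xi.
Proof. by elim: t xi => //= t IH xi; under eq_bigr do rewrite IH. Qed.

Hypothesis e_irr : irreflexive e.

Lemma usm_step_sum1 (eta : config V M) : \sum_xi usm_step R e eta xi = 1.
Proof.
have [edges0|edges_nonempty] := eqVneq #|edges| 0%N.
  by rewrite /usm_step edges0 sum_delta.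
under eq_bigr do rewrite usm_stepE //.
rewrite -mulr_sumr exchange_big /=.
rewrite (eq_bigr (fun _ => 1)) => [|p e_p]; last first.
  by apply: edge_kernel_sum1; apply: contraTneq e_p => ->; rewrite e_irr.
by rewrite sumr_const -[_ *+ _]mulr_natr mul1r mulVf ?pnatr_eq0.
Qed.

Lemma usm_step_transfer (eta : config V M) x y : e x y ->
  0 < usm_step R e eta (reassign eta x y 0 (cval eta x + cval eta y)).
Proof.
move=> e_xy; have xy : x != y by apply: contraTneq e_xy => ->; rewrite e_irr.
have upd : is_update eta (reassign eta x y 0 (cval eta x + cval eta y)) x y 0 0.
  by apply/is_updateP => z; rewrite cval_reassign // !subn0.
exact: usm_step_gt0 e_xy _ _ upd.
Qed.

Lemma reachable_path_transfer (v0 : V) (p : seq V) x (eta : config V M) :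
  path e x p -> last x p = v0 -> x != v0 ->
  exists2 eta', reachable (@usm_step R V e M) eta eta' &
                (cval eta v0 + cval eta x <= cval eta' v0)%N.
Proof.
elim: p x eta => [|y p IH] x eta /=; first by move=> _ ->; rewrite eqxx.
move=> /andP[e_xy path_p] last_p x_v0.
have xy : x != y by apply: contraTneq e_xy => ->; rewrite e_irr.
set eta1 := reassign eta x y 0 (cval eta x + cval eta y).
have to_eta1 : reachable (@usm_step R V e M) eta eta1.
  exact: reachable_step (usm_step_transfer eta e_xy).
have eta1_y : cval eta1 y = (cval eta x + cval eta y)%N.
  by rewrite cval_reassign // eq_sym (negbTE xy) eqxx.
have [y_v0|y_v0] := eqVneq y v0.
  by exists eta1; rewrite // -y_v0 eta1_y addnC.
have [eta' to_eta' eta'_v0] := IH y eta1 path_p last_p y_v0.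
exists eta'; first exact: (reachable_trans (@usm_step_ge0) to_eta1 to_eta').
apply: leq_trans eta'_v0; rewrite eta1_y cval_reassign //.
by rewrite eq_sym (negbTE x_v0) eq_sym (negbTE y_v0) leq_add2l leq_addr.
Qed.

Lemma reachable_concentrated (v0 : V) (c : config V M) :
  (forall x y, connect e x y) -> cval c v0 = M ->
  forall eta, reachable (@usm_step R V e M) eta c.
Proof.
move=> e_conn c_v0 eta.
have from_concentrated (eta' : config V M) : cval eta' v0 = M ->
    reachable (@usm_step R V e M) eta' c.
  move=> eta'_v0; rewrite (concentrated_unique eta'_v0 c_v0).
  exact: reachable_refl.
have [n gap] : exists n, (M - cval eta v0 <= n)%N by exists (M - cval eta v0)%N.
elim: n eta gap => [|n IH] eta gap.
  apply: from_concentrated; apply/eqP; rewrite eqn_leq cval_le.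
  by rewrite -subn_eq0 -leqn0.
case: (pickP (fun x => (x != v0) && (0 < cval eta x)%N)) => [x|empty].
  case/andP=> x_v0 x_pos.
  have /connectP[p path_p last_p] := e_conn x v0.
  have [eta' to_eta' eta'_v0] :=
    reachable_path_transfer eta path_p (esym last_p) x_v0.
  apply: (reachable_trans (@usm_step_ge0) to_eta' (IH eta' _)).
  by move: gap x_pos eta'_v0 (cval_le eta' v0); lia.
apply: from_concentrated.
rewrite -[RHS](cval_sum eta) (bigD1 v0) //= big1 ?addn0 //.
by move=> z z_v0; have := empty z; rewrite /= z_v0 lt0n => /negbFE/eqP.
Qed.

End UniformSavingKernel.

Theorem lemma5 (R : realType) (V : finType) (e : rel V) (M : nat) :
  (0 < #|V|)%N -> symmetric e -> irreflexive e ->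
  (forall x y : V, connect e x y) ->
  exists pi : config V M -> R,
    [/\ @usm_stationary R V e M pi,
        (forall pi' : config V M -> R, @usm_stationary R V e M pi' -> pi' = pi) &
        (forall xi eta : config V M,
           (fun t : nat => @usm_law R V e M t eta xi) @ \oo --> pi xi)].
Proof.
move=> /card_gt0P[v0 _] _ e_irr e_conn.
have [c c_v0] := concentrated_exists M v0.
have P_ge0 := @usm_step_ge0 R V e M.
have P_sum1 (eta : config V M) := usm_step_sum1 R e_irr eta.
have [K [d [d_gt0 K_c]]] := doeblin_of_reachable P_ge0 (usm_step_refl_gt0 R e c)
  (reachable_concentrated R e_irr e_conn c_v0).
pose pi xi := lim ((fun t => nstep (@usm_step R V e M) t c xi) @ \oo).
have nstep_cvg_pi a b :
    (fun t => nstep (@usm_step R V e M) t a b) @ \oo --> pi b.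
  exact: (nstep_cvg P_ge0 P_sum1 d_gt0 K_c a (b := b)).
exists pi; split.
- split; first exact: limit_ge0.
  by split; [exact: limit_sum1 | exact: limit_invariant].
- by move=> pi' [_ [pi'_sum1 pi'_inv]]; exact: invariant_unique.
- by move=> xi eta; under eq_fun do rewrite usm_law_nstep; exact: nstep_cvg_pi.
Qed.
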